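(* For all $M\geq 2$: (1) $g(M)=F_M+\sum_{k=1}^{M-1}F_kF_{M-k}$; (2) $h(M)=F_M+\sum_{k=1}^{M-2}F_kF_{M-1-k}$; (3) $g_1(M)=h_1(M)=\sum_{k=1}^{M-1}F_kF_{M-k}$; (4) $g(M)-h(M)=g_1(M)-g_1(M-1)=h_1(M)-h_1(M-1)=F_{M-1}+\sum_{k=1}^{M-3}F_kF_{M-2-k}$ (with $g_1(0)=h_1(0)=0$ if needed, and empty sums equal to $0$).
   Context: $F_k$ denotes the Fibonacci numbers with $F_{-1}=1$, $F_0=0$, $F_1=1$, $F_k=F_{k-1}+F_{k-2}$. The perimeter of a nonempty partition $\lambda$ with largest part $\lambda_1$ and $\ell(\lambda)$ parts is $\lambda_1+\ell(\lambda)-1$. $\mathcal G(M)$ is the set of partitions into odd parts with perimeter $M$, $\mathcal H(M)$ the set of partitions into distinct parts with perimeter $M$; $g(M)$ (resp. $h(M)$) is the total number of parts, summed over all partitions in $\mathcal G(M)$ (resp. $\mathcal H(M)$). $\mathcal G_1(M)$ is the set of partitions with perimeter $M$ in which exactly one distinct even integer occurs as a part (possibly with multiplicity greater than one) and all other parts are odd; $\mathcal H_1(M)$ is the set of partitions with perimeter $M$ in which exactly one part value occurs at least twice and every other part value occurs exactly once. $g_1(M)=|\mathcal G_1(M)|$, $h_1(M)=|\mathcal H_1(M)|$. *)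

From mathcomp Require Import all_boot all_order all_algebra.
Set Implicit Arguments. Unset Strict Implicit. Unset Printing Implicit Defensive.

Fixpoint fib (n : nat) : nat :=
  match n with
  | 0 => 0
  | 1 => 1
  | (m.+1 as n').+1 => fib n' + fib m
  end.

Definition is_partition (s : seq nat) : bool :=
  sorted geq s && all (fun x => 0 < x) s.

Definition perimeter (s : seq nat) : nat := (head 0 s + size s).-1.

(* All sequences of length <= n with entries in [0, k]
   (a finite superset of all partitions of perimeter <= min n k). *)
Fixpoint all_seqs (n k : nat) : seq (seq nat) :=
  match n with
  | 0 => [:: [::]]
  | n'.+1 => [::] :: [seq x :: t | x <- iota 0 k.+1, t <- all_seqs n' k]
  end.

(* Nonempty partitions with perimeter M satisfying P (a partition with
   perimeter M has at most M parts, each at most M). *)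
Definition parts_perim (P : pred (seq nat)) (M : nat) : seq (seq nat) :=
  [seq s <- undup (all_seqs M M) |
     [&& is_partition s, s != [::], perimeter s == M & P s]].

Definition Gset (M : nat) := parts_perim (fun s => all odd s) M.
Definition Hset (M : nat) := parts_perim (fun s => uniq s) M.
Definition G1set (M : nat) :=
  parts_perim (fun s => size (undup [seq x <- s | ~~ odd x]) == 1) M.
Definition H1set (M : nat) :=
  parts_perim (fun s => size [seq x <- undup s | 1 < count_mem x s] == 1) M.

Definition g (M : nat) : nat := sumn [seq size s | s <- Gset M].
Definition h (M : nat) : nat := sumn [seq size s | s <- Hset M].
Definition g1 (M : nat) : nat := size (G1set M).
Definition h1 (M : nat) : nat := size (H1set M).

From mathcomp Require Import all_boot all_order all_algebra.
From mathcomp Require Import zify.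
Set Implicit Arguments. Unset Strict Implicit. Unset Printing Implicit Defensive.

(* Split each family according to the smallest part.  A partition into odd
   parts of perimeter M either ends with a part 1, whose removal leaves
   perimeter M-1, or has all parts >= 3, and subtracting 2 from every part
   leaves perimeter M-2.  A partition into distinct parts either avoids 1, and
   subtracting 1 from every part leaves perimeter M-1, or has smallest part 1,
   and removing it and subtracting 1 leaves perimeter M-2.  These bijections
   give |G(M)| = |H(M)| = F_M and, counting parts,
   g(M) = g(M-1) + g(M-2) + F_{M-1} and h(M) = h(M-1) + h(M-2) + F_{M-2}.
   The same splittings apply to G_1 and H_1, except for the partitions E(M)
   whose even value 2 is the smallest part (resp. C(M) whose repeated value is
   1).  Removing the last 2 (resp. 1), and shrinking the other parts when no
   copy of it remains, gives |E(M)| = |E(M-1)| + |G(M-3)| and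
   |C(M)| = |C(M-1)| + |H(M-3)|, so both have F_{M-1} elements, and g_1, h_1
   satisfy u(M) = u(M-1) + u(M-2) + F_{M-1}, which is also the recurrence of
   the convolution sum_k F_k F_{M-k}. *)

Lemma uniq_cat_separated (T : eqType) (d : pred T) (A B : seq T) :
  uniq A -> uniq B -> all d A -> all (predC d) B -> uniq (A ++ B).
Proof.
move=> uA uB dA dB; rewrite cat_uniq uA uB andbT /=.
by apply/hasPn => x /(allP dB) /=; apply: contra; apply: (allP dA).
Qed.

Lemma count_mem_rcons (T : eqType) (s : seq T) x y :
  count_mem x (rcons s y) = count_mem x s + (y == x).
Proof. by rewrite -cats1 count_cat /= addn0. Qed.

Lemma perm_undup_rcons_mem (T : eqType) (s : seq T) x :
  x \in s -> perm_eq (undup (rcons s x)) (undup s).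
Proof.
move=> xs; apply: uniq_perm; rewrite ?undup_uniq // => z.
by rewrite !mem_undup mem_rcons in_cons; case: eqP => // ->.
Qed.

Lemma uniqE_count (T : eqType) (s : seq T) : uniq s = ~~ has (fun x => 1 < count_mem x s) s.
Proof.
apply/idP/hasPn => [s_uniq x xs | s_le1]; first by rewrite count_uniq_mem // xs.
apply: count_mem_uniq => x; have [xs | /count_memPn //] := boolP (x \in s).
by apply/eqP; rewrite eqn_leq leqNgt s_le1 //= -has_count has_pred1.
Qed.

(** * Partitions and their perimeter *)

Lemma geqn_trans : transitive geq.
Proof. by move=> a b c ba cb; apply: leq_trans cb ba. Qed.

Lemma sorted_geq_rcons t y : sorted geq (rcons t y) = sorted geq t && (y <= last y t).
Proof. by case: t => [|a t] /=; rewrite ?leqnn // rcons_path. Qed.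

Lemma sorted_geq_rcons_ge t y : sorted geq (rcons t y) -> all (leq y) (rcons t y).
Proof.
elim: t => [|a t IH] /=; first by rewrite leqnn.
by rewrite (path_sortedE geqn_trans) all_rcons => /andP[/andP[ya _] /IH ->]; rewrite andbT.
Qed.

Lemma sorted_geq_shift c t : sorted geq (map (addn c) t) = sorted geq t.
Proof. by rewrite sorted_map; apply: eq_sorted => x y /=; rewrite /geq leq_add2l. Qed.

Lemma last_eq_sorted_rcons t y : sorted geq (rcons t y) -> y \in t -> last 0 t = y.
Proof.
case/lastP: t => [|t z] // + yt; rewrite last_rcons sorted_geq_rcons last_rcons.
case/andP=> /sorted_geq_rcons_ge/allP zmin yz.
by apply/eqP; rewrite eqn_leq zmin.
Qed.

Lemma is_partition_rcons t y :
  is_partition (rcons t y) = [&& is_partition t, 0 < y & y <= last y t].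
Proof.
rewrite /is_partition sorted_geq_rcons all_rcons.
by case: (sorted _ _); case: (0 < y); case: (y <= _); case: (all _ _).
Qed.

Lemma is_partition_rcons_gt t y : is_partition (rcons t y) -> y \notin t -> all (fun x => y < x) t.
Proof.
case/andP=> /sorted_geq_rcons_ge + _ yt; rewrite all_rcons => /andP[_ /allP t_ge].
by apply/allP => x xt; rewrite ltn_neqAle t_ge // andbT; apply: (contraNneq _ yt) => ->.
Qed.

Lemma is_partition_shift c t : 0 < c -> is_partition (map (addn c) t) = sorted geq t.
Proof.
move=> c0; rewrite /is_partition sorted_geq_shift all_map.
by rewrite (@eq_all _ _ predT) ?all_predT ?andbT // => x /=; rewrite addn_gt0 c0.
Qed.

Lemma perimeter_cons a t : perimeter (a :: t) = a + size t.
Proof. by rewrite /perimeter /= addnS. Qed.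

Lemma perimeter_shift c t : t != [::] -> perimeter (map (addn c) t) = perimeter t + c.
Proof. by case: t => [|a t] // _; rewrite /= !perimeter_cons size_map; lia. Qed.

Lemma last_shift_ge c t : c <= last c (map (addn c) t).
Proof. by case/lastP: t => [|t z] //; rewrite map_rcons last_rcons leq_addr. Qed.

Lemma notin_shift c t : all (fun x => 0 < x) t -> c \notin map (addn c) t.
Proof. by move=> t0; apply/mapP => -[x /(allP t0) x0]; lia. Qed.

Lemma all_gt_unshift c s :
  all (fun x => c < x) s -> exists2 u, s = map (addn c) u & all (fun x => 0 < x) u.
Proof.
move=> cs; exists (map (subn^~ c) s).
  by rewrite -map_comp map_id_in // => x /(allP cs) /ltnW /subnKC.
by rewrite all_map; apply: sub_all cs => x /=; rewrite subn_gt0.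
Qed.

Lemma is_partition_rcons_unshift c t y : is_partition (rcons t y) -> c < y ->
  exists2 u, rcons t y = map (addn c) u & all (fun x => 0 < x) u.
Proof.
move=> /andP[/sorted_geq_rcons_ge t_ge _] cy; apply: all_gt_unshift.
by apply: sub_all t_ge => x; apply: leq_trans.
Qed.

Lemma last_pos t y : is_partition t -> t != [::] -> 0 < last y t.
Proof. by case/lastP: t => [|t z] //; rewrite is_partition_rcons last_rcons => /and3P[]. Qed.

(** * Enumeration of the partitions of a given perimeter *)

Lemma mem_all_seqs n k s : size s <= n -> all (leq^~ k) s -> s \in all_seqs n k.
Proof.
elim: n s => [|n IH] [|x t] // st /andP[xk tk]; rewrite in_cons; apply/orP; right.
by apply: (allpairs_f (fun x t => x :: t)); rewrite ?mem_iota //; apply: IH.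
Qed.

Lemma mem_parts_perim P M s :
  (s \in parts_perim P M) = [&& is_partition s, s != [::], perimeter s == M & P s].
Proof.
rewrite mem_filter mem_undup andb_idr // => /and4P[+ s0 /eqP <- _].
case: s s0 => [|a t] // _ /andP[/= + /andP[a0 _]].
rewrite (path_sortedE geqn_trans) perimeter_cons => /andP[ta _].
apply: mem_all_seqs => /=; first by rewrite addnC -addn1 leq_add2l.
by rewrite leq_addr; apply: sub_all ta => x /= /leq_trans; apply; exact: leq_addr.
Qed.

Lemma parts_perim_pos P M s : s \in parts_perim P M -> all (fun x => 0 < x) s.
Proof. by rewrite mem_parts_perim => /andP[/andP[]]. Qed.

Lemma uniq_parts_perim P M : uniq (parts_perim P M).
Proof. by rewrite filter_uniq ?undup_uniq. Qed.

Lemma uniq_map_parts_perim (f : seq nat -> seq nat) P M :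
  injective f -> uniq (map f (parts_perim P M)).
Proof. by move=> f_inj; rewrite map_inj_uniq ?uniq_parts_perim. Qed.

Lemma mem_parts_perim_rcons (P Q : pred (seq nat)) M t y :
  0 < y <= M -> P (rcons t y) = Q t ->
  (rcons t y \in parts_perim P M.+1) = (y <= last y t) && (t \in parts_perim Q M).
Proof.
case/andP=> y0 yM PQ; rewrite !mem_parts_perim is_partition_rcons y0 PQ.
case: t => [|a t] /= in PQ *.
  by rewrite /perimeter /= addn1 /=; case: eqP yM => [->|_]; rewrite ?ltnn ?andbF.
rewrite !perimeter_cons size_rcons addnS eqSS.
by case: (is_partition _); case: (y <= _).
Qed.

Lemma mem_parts_perim_rcons1 (P Q : pred (seq nat)) M t :
  0 < M -> P (rcons t 1) = Q t ->
  (rcons t 1 \in parts_perim P M.+1) = (t \in parts_perim Q M).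
Proof.
move=> M0 PQ; rewrite (mem_parts_perim_rcons (Q := Q)) ?M0 //.
by apply: andb_idl; rewrite mem_parts_perim => /and3P[/last_pos + t0 _]; apply.
Qed.

Lemma mem_parts_perim_shift (P Q : pred (seq nat)) M c u :
  0 < c -> all (fun x => 0 < x) u -> P (map (addn c) u) = Q u ->
  (map (addn c) u \in parts_perim P (M + c)) = (u \in parts_perim Q M).
Proof.
move=> c0 u0 PQ; rewrite !mem_parts_perim is_partition_shift // PQ /is_partition u0 andbT.
by case: u {u0 PQ} => [|a u] //; rewrite perimeter_shift // eqn_add2r.
Qed.

(** * Odd parts and distinct parts *)

Lemma all_odd_shift2 u : all odd (map (addn 2) u) = all odd u.
Proof. by elim: u => //= a u ->; rewrite negbK. Qed.

Lemma mem_Gset_rcons1 M t : 0 < M -> (rcons t 1 \in Gset M.+1) = (t \in Gset M).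
Proof. by move=> M0; apply: mem_parts_perim_rcons1 => //=; rewrite all_rcons. Qed.

Lemma mem_Gset_shift2 M u : (map (addn 2) u \in Gset M.+2) = (u \in Gset M).
Proof.
have [u_odd | u_even] := boolP (all odd u).
  rewrite -[M.+2]addn2; apply: mem_parts_perim_shift; rewrite //= ?all_odd_shift2 //.
  by apply: sub_all u_odd => x; apply: odd_gt0.
by rewrite !mem_parts_perim /= all_odd_shift2 (negbTE u_even) !andbF.
Qed.

Lemma Gset_rec M : 0 < M ->
  perm_eq (Gset M.+2) ([seq rcons t 1 | t <- Gset M.+1] ++ [seq map (addn 2) t | t <- Gset M]).
Proof.
move=> M0; apply: uniq_perm; first exact: uniq_parts_perim.
  apply: (@uniq_cat_separated _ (fun s : seq nat => 1 \in s)).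
  - exact/uniq_map_parts_perim/rcons_injl.
  - exact/uniq_map_parts_perim/inj_map/addnI.
  - by apply/allP => _ /mapP[t _ ->]; rewrite mem_rcons mem_head.
  - by apply/allP => _ /mapP[t _ ->] /=; apply/mapP => -[x _]; lia.
move=> s; rewrite mem_cat; apply/idP/orP => [|[] /mapP[t + ->]]; last 2 first.
- by rewrite -mem_Gset_rcons1.
- by rewrite -mem_Gset_shift2.
case/lastP: s => [|t y]; first by rewrite mem_parts_perim.
move=> /[dup] Hs; rewrite mem_parts_perim => /and4P[Hp _ _].
rewrite all_rcons => /andP[y_odd _].
have [y1 | y1] := eqVneq y 1; first by subst y; left; apply: map_f; rewrite -mem_Gset_rcons1.
have y3 : 2 < y by case: y y_odd y1 {Hs Hp} => [|[|[|y]]].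
have [u Es u0] := is_partition_rcons_unshift Hp y3.
by right; rewrite Es in Hs *; apply: map_f; rewrite -mem_Gset_shift2.
Qed.

Lemma mem_Hset_shift1 M u :
  all (fun x => 0 < x) u -> (map (addn 1) u \in Hset M.+1) = (u \in Hset M).
Proof.
by move=> u0; rewrite -[M.+1]addn1; apply: mem_parts_perim_shift => //=; rewrite (map_inj_uniq (@addnI 1)).
Qed.

Lemma mem_Hset_rcons1_shift1 M u :
  all (fun x => 0 < x) u -> (rcons (map (addn 1) u) 1 \in Hset M.+2) = (u \in Hset M).
Proof.
move=> u0; rewrite (@mem_parts_perim_rcons1 _ uniq) //; last by rewrite rcons_uniq notin_shift.
by rewrite -[M.+1]addn1; apply: mem_parts_perim_shift => //=; rewrite (map_inj_uniq (@addnI 1)).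
Qed.

Lemma Hset_rec M : 0 < M ->
  perm_eq (Hset M.+2)
    ([seq map (addn 1) t | t <- Hset M.+1] ++ [seq rcons (map (addn 1) t) 1 | t <- Hset M]).
Proof.
move=> M0; apply: uniq_perm; first exact: uniq_parts_perim.
  apply: (@uniq_cat_separated _ (fun s : seq nat => 1 \notin s)).
  - exact/uniq_map_parts_perim/inj_map/addnI.
  - exact/uniq_map_parts_perim/(inj_comp (@rcons_injl _ 1))/inj_map/addnI.
  - by apply/allP => _ /mapP[t /parts_perim_pos t0 ->]; apply: notin_shift.
  - by apply/allP => _ /mapP[t _ ->]; rewrite /= negbK mem_rcons mem_head.
move=> s; rewrite mem_cat; apply/idP/orP => [|[] /mapP[t Ht ->]]; last 2 first.
- by rewrite mem_Hset_shift1 ?(parts_perim_pos Ht).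
- by rewrite mem_Hset_rcons1_shift1 ?(parts_perim_pos Ht).
case/lastP: s => [|t y]; first by rewrite mem_parts_perim.
move=> Hs; have := Hs; rewrite mem_parts_perim => /and4P[Hp _ _].
rewrite rcons_uniq => /andP[yt _].
have [y1 | y1] := eqVneq y 1.
  subst y; right; have /all_gt_unshift[u Et u0] := is_partition_rcons_gt Hp yt.
  by rewrite Et in Hs *; apply: map_f; rewrite -(mem_Hset_rcons1_shift1 _ u0).
have y2 : 1 < y by move: Hp; rewrite is_partition_rcons => /and3P[_ y0 _]; lia.
have [u Es u0] := is_partition_rcons_unshift Hp y2.
by left; rewrite Es in Hs *; apply: map_f; rewrite -(mem_Hset_shift1 _ u0).
Qed.

(** * Exactly one even part value *)

Definition one_even_value (s : seq nat) : bool := size (undup [seq x <- s | ~~ odd x]) == 1.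

Lemma one_even_value_rcons_odd t x : odd x -> one_even_value (rcons t x) = one_even_value t.
Proof. by move=> x_odd; rewrite /one_even_value filter_rcons x_odd. Qed.

Lemma one_even_value_rcons_mem t x : x \in t -> one_even_value (rcons t x) = one_even_value t.
Proof.
move=> xt; rewrite /one_even_value filter_rcons; case: ifP => // x_even.
by rewrite (perm_size (perm_undup_rcons_mem _)) // mem_filter x_even.
Qed.

Lemma one_even_value_shift2 u : one_even_value (map (addn 2) u) = one_even_value u.
Proof.
rewrite /one_even_value filter_map undup_map_inj ?size_map; last exact: addnI.
by congr (size (undup _) == 1); apply: eq_filter => x /=; rewrite negbK.
Qed.

Lemma one_even_value_rcons2 u : 2 \notin u -> one_even_value (rcons u 2) = all odd u.
Proof.
move=> u2; rewrite /one_even_value filter_rcons /= undup_rcons size_rcons eqSS size_eq0.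
rewrite (@eq_in_filter _ _ predT) ?filter_predT; last first.
  by move=> y; rewrite mem_undup mem_filter => /andP[_ yu] /=; apply: contraNneq u2 => <-.
have -> : (undup [seq x <- u | ~~ odd x] == [::]) = ([seq x <- u | ~~ odd x] == [::]).
  by apply/eqP/eqP => [/undup_nil | ->].
by rewrite -[_ == _]negbK -has_filter has_predC negbK.
Qed.

Lemma mem_G1set_rcons1 M t : 0 < M -> (rcons t 1 \in G1set M.+1) = (t \in G1set M).
Proof. by move=> M0; apply: mem_parts_perim_rcons1 => //; apply: one_even_value_rcons_odd. Qed.

Lemma mem_G1set_shift2 M u :
  all (fun x => 0 < x) u -> (map (addn 2) u \in G1set M.+2) = (u \in G1set M).
Proof.
by move=> u0; rewrite -[M.+2]addn2; apply: mem_parts_perim_shift => //; apply: one_even_value_shift2.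
Qed.

Definition G1set_last2 (M : nat) :=
  parts_perim (fun s => one_even_value s && (last 0 s == 2)) M.

Lemma mem_G1set_last2 M s : (s \in G1set_last2 M) = (s \in G1set M) && (last 0 s == 2).
Proof. by rewrite !mem_parts_perim !andbA. Qed.

Lemma G1set_last2P M s : s \in G1set_last2 M -> 2 \in s /\ all (leq 2) s.
Proof.
rewrite mem_parts_perim => /and4P[/andP[+ _] _ _ /andP[_]].
case/lastP: s => [|t y] //; rewrite last_rcons => /sorted_geq_rcons_ge + /eqP y2.
by rewrite y2 mem_rcons mem_head.
Qed.

Lemma mem_G1set_last2_rcons2 M t : 1 < M -> last 0 t = 2 ->
  (rcons t 2 \in G1set_last2 M.+1) = (t \in G1set_last2 M).
Proof.
case/lastP: t => [|t z] // M1; rewrite last_rcons => ->.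
rewrite (@mem_parts_perim_rcons _ (fun s => one_even_value s && (last 0 s == 2))) //.
  by rewrite last_rcons leqnn.
by rewrite !last_rcons one_even_value_rcons_mem // mem_rcons mem_head.
Qed.

Lemma mem_G1set_last2_shift2 M u : all (fun x => 0 < x) u ->
  (rcons (map (addn 2) u) 2 \in G1set_last2 M.+3) = (u \in Gset M).
Proof.
move=> u0; rewrite (@mem_parts_perim_rcons _ (fun s => all odd s)) //.
  by rewrite last_shift_ge; apply: mem_Gset_shift2.
by rewrite one_even_value_rcons2 ?notin_shift // last_rcons eqxx andbT.
Qed.

Lemma G1set_last2_rec M : 0 < M ->
  perm_eq (G1set_last2 M.+3)
    ([seq rcons t 2 | t <- G1set_last2 M.+2] ++ [seq rcons (map (addn 2) t) 2 | t <- Gset M]).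
Proof.
move=> M0; apply: uniq_perm; first exact: uniq_parts_perim.
  apply: (@uniq_cat_separated _ (fun s : seq nat => 1 < count_mem 2 s)).
  - exact/uniq_map_parts_perim/rcons_injl.
  - exact/uniq_map_parts_perim/(inj_comp (@rcons_injl _ 2))/inj_map/addnI.
  - apply/allP => _ /mapP[t /G1set_last2P[t2 _] ->].
    by rewrite /= count_mem_rcons eqxx addn1 ltnS -has_count has_pred1.
  - apply/allP => _ /mapP[t /parts_perim_pos t0 ->].
    by rewrite /= count_mem_rcons eqxx (count_memPn (notin_shift 2 t0)).
move=> s; rewrite mem_cat; apply/idP/orP => [|[] /mapP[t Ht ->]]; last 2 first.
- by move: (Ht); rewrite mem_G1set_last2 => /andP[_ /eqP t2]; rewrite mem_G1set_last2_rcons2.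
- by rewrite mem_G1set_last2_shift2 ?(parts_perim_pos Ht).
case/lastP: s => [|t y]; first by rewrite mem_parts_perim.
move=> Hs; have := Hs; rewrite mem_parts_perim last_rcons => /and4P[Hp _ _ /andP[_ /eqP y2]].
subst y; have [t2 | t2] := boolP (2 \in t).
  left; apply: map_f; rewrite -mem_G1set_last2_rcons2 //.
  exact: last_eq_sorted_rcons (proj1 (andP Hp)) t2.
have /all_gt_unshift[u Et u0] := is_partition_rcons_gt Hp t2.
by right; rewrite Et in Hs *; apply: map_f; rewrite -(mem_G1set_last2_shift2 _ u0).
Qed.

Lemma G1set_rec M : 0 < M ->
  perm_eq (G1set M.+2)
    ([seq rcons t 1 | t <- G1set M.+1] ++ [seq map (addn 2) t | t <- G1set M] ++ G1set_last2 M.+2).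
Proof.
move=> M0; apply: uniq_perm; first exact: uniq_parts_perim.
  apply: (@uniq_cat_separated _ (fun s : seq nat => 1 \in s)).
  - exact/uniq_map_parts_perim/rcons_injl.
  - apply: (@uniq_cat_separated _ (fun s : seq nat => 2 \notin s)).
    + exact/uniq_map_parts_perim/inj_map/addnI.
    + exact: uniq_parts_perim.
    + by apply/allP => _ /mapP[t /parts_perim_pos t0 ->]; apply: notin_shift.
    + by apply/allP => s /G1set_last2P[s2 _] /=; rewrite negbK.
  - by apply/allP => _ /mapP[t _ ->]; rewrite mem_rcons mem_head.
  - apply/allP => s; rewrite mem_cat => /orP[/mapP[t _ ->] | /G1set_last2P[_ /allP s_ge]] /=.
      by apply/mapP => -[x _]; lia.
    by apply/negP => /s_ge.
move=> s; rewrite !mem_cat; apply/idP/or3P => [|[] ]; last 3 first.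
- by case/mapP=> t Ht ->; rewrite mem_G1set_rcons1.
- by case/mapP=> t Ht ->; rewrite mem_G1set_shift2 ?(parts_perim_pos Ht).
- by rewrite mem_G1set_last2 => /andP[].
case/lastP: s => [|t y]; first by rewrite mem_parts_perim.
move=> Hs; have := Hs; rewrite mem_parts_perim => /and4P[Hp _ _ _].
have [y1 | y1] := eqVneq y 1.
  by subst y; apply: Or31; apply: map_f; rewrite -mem_G1set_rcons1.
have [y2 | y2] := eqVneq y 2.
  by apply: Or33; rewrite mem_G1set_last2 Hs last_rcons y2 /=.
have y3 : 2 < y by move: Hp; rewrite is_partition_rcons => /and3P[_ y0 _]; lia.
have [u Es u0] := is_partition_rcons_unshift Hp y3.
by apply: Or32; rewrite Es in Hs *; apply: map_f; rewrite -(mem_G1set_shift2 _ u0).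
Qed.

(** * Exactly one repeated part value *)

Definition one_repeated_value (s : seq nat) : bool :=
  size [seq x <- undup s | 1 < count_mem x s] == 1.

Lemma one_repeated_value_map_inj f u :
  injective f -> one_repeated_value (map f u) = one_repeated_value u.
Proof.
move=> f_inj; rewrite /one_repeated_value undup_map_inj // filter_map size_map.
congr (size _ == 1); apply: eq_filter => x /=; rewrite count_map.
by congr (1 < _); apply: eq_count => z /=; rewrite inj_eq.
Qed.

Lemma one_repeated_value_rcons_notin t x :
  x \notin t -> one_repeated_value (rcons t x) = one_repeated_value t.
Proof.
rewrite /one_repeated_value => xt; have -> : undup (rcons t x) = rcons (undup t) x.
  rewrite undup_rcons; congr rcons; apply/all_filterP/allP => z.
  by rewrite mem_undup => zt; apply: (contraNneq _ xt) => <-.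
rewrite filter_rcons count_mem_rcons eqxx (count_memPn xt) /=.
congr (size _ == 1); apply: eq_in_filter => z; rewrite mem_undup => zt.
have /negbTE xz : x != z by apply: (contraNneq _ xt) => ->.
by rewrite count_mem_rcons xz addn0.
Qed.

Lemma one_repeated_value_rcons_rep t x :
  1 < count_mem x t -> one_repeated_value (rcons t x) = one_repeated_value t.
Proof.
move=> xt2; have xt : x \in t by rewrite -has_pred1 has_count ltnW.
rewrite /one_repeated_value !size_filter (permP (perm_undup_rcons_mem xt)).
congr (_ == 1); apply: eq_in_count => z _ /=.
by rewrite count_mem_rcons; case: eqVneq => [<- | _]; rewrite ?addn0 // addn1 ltnS ltnW.
Qed.

Lemma one_repeated_value_rcons11 t :
  1 \notin t -> one_repeated_value (rcons (rcons t 1) 1) = uniq t.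
Proof.
move=> t1; have t1' : 1 \in rcons t 1 by rewrite mem_rcons mem_head.
rewrite /one_repeated_value !size_filter (permP (perm_undup_rcons_mem t1')).
rewrite undup_rcons.
have -> : [seq y <- undup t | y != 1] = undup t.
  by apply/all_filterP/allP => z; rewrite mem_undup => zt; apply: (contraNneq _ t1) => <-.
rewrite -[rcons (undup t) 1]cats1 count_cat /= !count_mem_rcons eqxx (count_memPn t1) addn0 /= addn1 eqSS.
rewrite (@eq_in_count _ _ (fun z => 1 < count_mem z t)) => [|z].
  by rewrite uniqE_count -has_undup has_count -leqn0 leqNgt.
rewrite mem_undup => zt; have /negbTE t1z : 1 != z by apply: (contraNneq _ t1) => ->.
by rewrite /= !count_mem_rcons t1z !addn0.
Qed.

Lemma is_partition_rcons_mem1 t y : is_partition (rcons t y) -> 1 \in rcons t y -> y = 1.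
Proof.
move=> /[dup] /andP[/sorted_geq_rcons_ge /allP t_ge _]; rewrite is_partition_rcons.
by case/and3P=> _ y0 _ /t_ge; case: y y0 {t_ge} => [|[]].
Qed.

Lemma mem_H1set_shift1 M u :
  all (fun x => 0 < x) u -> (map (addn 1) u \in H1set M.+1) = (u \in H1set M).
Proof.
move=> u0; rewrite -[M.+1]addn1; apply: mem_parts_perim_shift => //.
exact/one_repeated_value_map_inj/addnI.
Qed.

Lemma mem_H1set_rcons1_shift1 M u :
  all (fun x => 0 < x) u -> (rcons (map (addn 1) u) 1 \in H1set M.+2) = (u \in H1set M).
Proof.
move=> u0; rewrite (@mem_parts_perim_rcons1 _ one_repeated_value) //.
  exact: mem_H1set_shift1.
exact/one_repeated_value_rcons_notin/notin_shift.
Qed.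

Definition H1set_rep1 (M : nat) :=
  parts_perim (fun s => one_repeated_value s && (1 < count_mem 1 s)) M.

Lemma mem_H1set_rep1 M s : (s \in H1set_rep1 M) = (s \in H1set M) && (1 < count_mem 1 s).
Proof. by rewrite !mem_parts_perim !andbA. Qed.

Lemma mem_H1set_rep1_rcons1 M t : 0 < M -> 1 < count_mem 1 t ->
  (rcons t 1 \in H1set_rep1 M.+1) = (t \in H1set_rep1 M).
Proof.
move=> M0 t1; apply: mem_parts_perim_rcons1 => //=.
by rewrite one_repeated_value_rcons_rep // count_mem_rcons eqxx addn1 ltnS t1 (ltnW t1).
Qed.

Lemma mem_H1set_rep1_rcons11 M u : all (fun x => 0 < x) u ->
  (rcons (rcons (map (addn 1) u) 1) 1 \in H1set_rep1 M.+3) = (u \in Hset M).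
Proof.
move=> u0; have u1 := notin_shift 1 u0.
rewrite (@mem_parts_perim_rcons1 _
  (fun v => one_repeated_value (rcons v 1) && (1 < count_mem 1 (rcons v 1)))) //.
rewrite (@mem_parts_perim_rcons1 _ uniq) //; first exact: mem_Hset_shift1.
by rewrite one_repeated_value_rcons11 // !count_mem_rcons eqxx (count_memPn u1) andbT.
Qed.

Lemma H1set_rep1_rec M : 0 < M ->
  perm_eq (H1set_rep1 M.+3)
    ([seq rcons t 1 | t <- H1set_rep1 M.+2] ++
     [seq rcons (rcons (map (addn 1) t) 1) 1 | t <- Hset M]).
Proof.
move=> M0; apply: uniq_perm; first exact: uniq_parts_perim.
  apply: (@uniq_cat_separated _ (fun s : seq nat => 2 < count_mem 1 s)).
  - exact/uniq_map_parts_perim/rcons_injl.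
  - apply/uniq_map_parts_perim/(inj_comp (@rcons_injl _ 1)).
    exact/(inj_comp (@rcons_injl _ 1))/inj_map/addnI.
  - apply/allP => _ /mapP[t + ->]; rewrite mem_H1set_rep1 => /andP[_ t1].
    by rewrite /= count_mem_rcons eqxx addn1 ltnS.
  - apply/allP => _ /mapP[t /parts_perim_pos t0 ->].
    by rewrite /= !count_mem_rcons eqxx (count_memPn (notin_shift 1 t0)).
move=> s; rewrite mem_cat; apply/idP/orP => [|[] /mapP[t Ht ->]]; last 2 first.
- by move: (Ht); rewrite mem_H1set_rep1 => /andP[_ t1]; rewrite mem_H1set_rep1_rcons1.
- by rewrite mem_H1set_rep1_rcons11 ?(parts_perim_pos Ht).
case/lastP: s => [|t y]; first by rewrite mem_parts_perim.
move=> Hs; have := Hs; rewrite mem_H1set_rep1 => /andP[+ s1].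
rewrite mem_parts_perim => /and4P[Hp _ _ _].
have y1 : y = 1.
  by apply: is_partition_rcons_mem1 Hp _; rewrite -has_pred1 has_count ltnW.
subst y; move: s1; rewrite count_mem_rcons eqxx addn1 ltnS => t1.
have [t1' | t1'] := eqVneq (count_mem 1 t) 1; last first.
  by left; apply: map_f; rewrite -mem_H1set_rep1_rcons1 // ltn_neqAle eq_sym t1' t1.
have t1'' : 1 \in t by rewrite -has_pred1 has_count t1'.
move: Hp; rewrite is_partition_rcons => /and3P[Ht _ _].
case/lastP: t Ht t1' t1'' Hs {t1} => [|t y] // Ht t1' /(is_partition_rcons_mem1 Ht) y1.
subst y; move: t1'; rewrite count_mem_rcons eqxx addn1 => /eqP; rewrite eqSS => /eqP/count_memPn t1.
have /all_gt_unshift[u Et u0] := is_partition_rcons_gt Ht t1.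
by right; rewrite Et in Hs *; apply: map_f; rewrite -(mem_H1set_rep1_rcons11 _ u0).
Qed.

Lemma H1set_rec M : 0 < M ->
  perm_eq (H1set M.+2)
    ([seq map (addn 1) t | t <- H1set M.+1] ++
     [seq rcons (map (addn 1) t) 1 | t <- H1set M] ++ H1set_rep1 M.+2).
Proof.
move=> M0; apply: uniq_perm; first exact: uniq_parts_perim.
  apply: (@uniq_cat_separated _ (fun s : seq nat => 1 \notin s)).
  - exact/uniq_map_parts_perim/inj_map/addnI.
  - apply: (@uniq_cat_separated _ (fun s : seq nat => count_mem 1 s <= 1)).
    + exact/uniq_map_parts_perim/(inj_comp (@rcons_injl _ 1))/inj_map/addnI.
    + exact: uniq_parts_perim.
    + apply/allP => _ /mapP[t /parts_perim_pos t0 ->].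
      by rewrite /= count_mem_rcons eqxx (count_memPn (notin_shift 1 t0)).
    + by apply/allP => s; rewrite mem_H1set_rep1 /= -ltnNge => /andP[].
  - by apply/allP => _ /mapP[t /parts_perim_pos t0 ->]; apply: notin_shift.
  - apply/allP => s; rewrite mem_cat /= negbK => /orP[/mapP[t _ ->] | ].
      by rewrite mem_rcons mem_head.
    by rewrite mem_H1set_rep1 => /andP[_ /ltnW]; rewrite -has_count has_pred1.
move=> s; rewrite !mem_cat; apply/idP/or3P => [|[] ]; last 3 first.
- by case/mapP=> t Ht ->; rewrite mem_H1set_shift1 ?(parts_perim_pos Ht).
- by case/mapP=> t Ht ->; rewrite mem_H1set_rcons1_shift1 ?(parts_perim_pos Ht).
- by rewrite mem_H1set_rep1 => /andP[].
case/lastP: s => [|t y]; first by rewrite mem_parts_perim.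
move=> Hs; have := Hs; rewrite mem_parts_perim => /and4P[Hp _ _ _].
have [y1 | y1] := eqVneq y 1.
  subst y; have [t1 | t1] := boolP (1 \in t).
    apply: Or33; rewrite mem_H1set_rep1 Hs count_mem_rcons eqxx addn1 ltnS.
    by rewrite -has_pred1 has_count in t1.
  have /all_gt_unshift[u Et u0] := is_partition_rcons_gt Hp t1.
  by apply: Or32; rewrite Et in Hs *; apply: map_f; rewrite -(mem_H1set_rcons1_shift1 _ u0).
have y2 : 1 < y by move: Hp; rewrite is_partition_rcons => /and3P[_ y0 _]; lia.
have [u Es u0] := is_partition_rcons_unshift Hp y2.
by apply: Or31; rewrite Es in Hs *; apply: map_f; rewrite -(mem_H1set_shift1 _ u0).
Qed.

(** * Counting *)

Lemma sumn_size_map (f : seq nat -> seq nat) k (A : seq (seq nat)) :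
  (forall s, size (f s) = size s + k) ->
  sumn [seq size s | s <- map f A] = sumn [seq size s | s <- A] + k * size A.
Proof.
move=> fk; elim: A => [|s A IH] /=; first by rewrite muln0.
by rewrite IH fk mulnS; lia.
Qed.

Lemma rec2_ext (f u v : nat -> nat) :
  (forall n, u n.+2 = u n.+1 + u n + f n) -> (forall n, v n.+2 = v n.+1 + v n + f n) ->
  u 0 = v 0 -> u 1 = v 1 -> u =1 v.
Proof.
move=> u_rec v_rec u0 u1 n; suff: u n = v n /\ u n.+1 = v n.+1 by case.
by elim: n => [|n [IHn IHn1]]; split=> //; rewrite u_rec v_rec IHn IHn1.
Qed.

Lemma fibSS n : fib n.+2 = fib n.+1 + fib n.
Proof. by []. Qed.

Definition fib_conv (n : nat) : nat := \sum_(1 <= k < n) fib k * fib (n - k).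

Lemma fib_convSS n : fib_conv n.+2 = fib_conv n.+1 + fib_conv n + fib n.+1.
Proof.
rewrite /fib_conv big_nat_recr //= subSnn muln1.
rewrite (eq_big_nat _ _ (F2 := fun k => fib k * fib (n.+1 - k) + fib k * fib (n - k))); last first.
  move=> k /andP[_ kn]; rewrite -mulnDr.
  have -> : n.+2 - k = (n - k).+2 by lia.
  by have -> : n.+1 - k = (n - k).+1 by lia.
rewrite big_split /=; congr (_ + _ + _).
case: n => [|n]; first by rewrite !big_geq.
by rewrite big_nat_recr //= subnn muln0 addn0.
Qed.

Lemma size_Gset M : 0 < M -> size (Gset M) = fib M.
Proof.
case: M => // M _; apply: (@rec2_ext (fun=> 0) (fun n => size (Gset n.+1)) (fun n => fib n.+1)).
- by move=> n; rewrite (perm_size (Gset_rec _)) // size_cat !size_map addn0.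
- by move=> n; rewrite addn0.
- by vm_compute.
- by vm_compute.
Qed.

Lemma size_Hset M : 0 < M -> size (Hset M) = fib M.
Proof.
case: M => // M _; apply: (@rec2_ext (fun=> 0) (fun n => size (Hset n.+1)) (fun n => fib n.+1)).
- by move=> n; rewrite (perm_size (Hset_rec _)) // size_cat !size_map addn0.
- by move=> n; rewrite addn0.
- by vm_compute.
- by vm_compute.
Qed.

Lemma size_G1set_last2 M : size (G1set_last2 M.+2) = fib M.+1.
Proof.
elim: M => [|[|M] IH]; try by vm_compute.
by rewrite (perm_size (G1set_last2_rec _)) // size_cat !size_map IH size_Gset.
Qed.

Lemma size_H1set_rep1 M : size (H1set_rep1 M.+2) = fib M.+1.
Proof.
elim: M => [|[|M] IH]; try by vm_compute.
by rewrite (perm_size (H1set_rep1_rec _)) // size_cat !size_map IH size_Hset.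
Qed.

Lemma g_rec M : 0 < M -> g M.+2 = g M.+1 + g M + fib M.+1.
Proof.
move=> M0; rewrite /g (perm_sumn (perm_map size (Gset_rec M0))) map_cat sumn_cat.
rewrite (@sumn_size_map _ 1) => [|s]; last by rewrite size_rcons addn1.
rewrite (@sumn_size_map _ 0) => [|s]; last by rewrite size_map addn0.
by rewrite size_Gset //; lia.
Qed.

Lemma h_rec M : 0 < M -> h M.+2 = h M.+1 + h M + fib M.
Proof.
move=> M0; rewrite /h (perm_sumn (perm_map size (Hset_rec M0))) map_cat sumn_cat.
rewrite (@sumn_size_map _ 0) => [|s]; last by rewrite size_map addn0.
rewrite (@sumn_size_map _ 1) => [|s]; last by rewrite size_rcons size_map addn1.
by rewrite (size_Hset M0); lia.
Qed.

Lemma g1_rec M : 0 < M -> g1 M.+2 = g1 M.+1 + g1 M + fib M.+1.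
Proof.
by move=> M0; rewrite /g1 (perm_size (G1set_rec M0)) !size_cat !size_map size_G1set_last2 addnA.
Qed.

Lemma h1_rec M : 0 < M -> h1 M.+2 = h1 M.+1 + h1 M + fib M.+1.
Proof.
by move=> M0; rewrite /h1 (perm_size (H1set_rec M0)) !size_cat !size_map size_H1set_rep1 addnA.
Qed.

Lemma g_fib_conv M : 0 < M -> g M = fib M + fib_conv M.
Proof.
case: M => // M _.
apply: (@rec2_ext (fun n => fib n.+2) (fun n => g n.+1) (fun n => fib n.+1 + fib_conv n.+1)).
- by move=> n; rewrite g_rec.
- by move=> n; rewrite [fib n.+3]fibSS fib_convSS; lia.
- by rewrite /fib_conv unlock; vm_compute.
- by rewrite /fib_conv unlock; vm_compute.
Qed.

Lemma h_fib_conv M : 0 < M -> h M = fib M + fib_conv M.-1.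
Proof.
case: M => // M _.
apply: (@rec2_ext (fun n => fib n.+1) (fun n => h n.+1) (fun n => fib n.+1 + fib_conv n)).
- by move=> n; rewrite h_rec.
- by move=> n; rewrite [fib n.+3]fibSS fib_convSS; lia.
- by rewrite /fib_conv unlock; vm_compute.
- by rewrite /fib_conv unlock; vm_compute.
Qed.

Lemma g1_fib_conv M : 0 < M -> g1 M = fib_conv M.
Proof.
case: M => // M _.
apply: (@rec2_ext (fun n => fib n.+2) (fun n => g1 n.+1) (fun n => fib_conv n.+1)).
- by move=> n; rewrite g1_rec.
- by move=> n; rewrite fib_convSS.
- by rewrite /fib_conv unlock; vm_compute.
- by rewrite /fib_conv unlock; vm_compute.
Qed.

Lemma h1_fib_conv M : 0 < M -> h1 M = fib_conv M.
Proof.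
case: M => // M _.
apply: (@rec2_ext (fun n => fib n.+2) (fun n => h1 n.+1) (fun n => fib_conv n.+1)).
- by move=> n; rewrite h1_rec.
- by move=> n; rewrite fib_convSS.
- by rewrite /fib_conv unlock; vm_compute.
- by rewrite /fib_conv unlock; vm_compute.
Qed.

Local Open Scope ring_scope.

Theorem mainTheorem6 (M : nat) (hM : (2 <= M)%N) :
  [/\ g M = (fib M + \sum_(1 <= k < M) fib k * fib (M - k))%N,
      h M = (fib M + \sum_(1 <= k < M.-1) fib k * fib (M.-1 - k))%N,
      g1 M = (\sum_(1 <= k < M) fib k * fib (M - k))%N /\
      h1 M = (\sum_(1 <= k < M) fib k * fib (M - k))%N &
      let d := (fib M.-1 + \sum_(1 <= k < M - 2) fib k * fib (M - 2 - k))%N in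
      [/\ (g M)%:Z - (h M)%:Z = d%:Z,
          (g1 M)%:Z - (g1 M.-1)%:Z = d%:Z &
          (h1 M)%:Z - (h1 M.-1)%:Z = d%:Z]].
Proof.
case: M hM => [|[|M]] // _.
rewrite g_fib_conv // h_fib_conv // !g1_fib_conv // !h1_fib_conv //.
split=> // d; rewrite {}/d -[M.+2.-1]/M.+1 !subSS subn0 -/(fib_conv M).
have := fib_convSS M.
by split; rewrite subzn; try congr Posz; lia.
Qed.
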